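(* A rooted labeled forest that avoids $123$ avoids $3142$ if and only if it is a $P_2$-forest.
   Context: Rooted labeled forests are unordered forests with a distinguished root in each component and distinct integer labels $L(v)$. The ancestors of $v$ are the vertices on the path from the root of its component to $v$ (including $v$). An instance of a pattern $\pi$ of length $k$ is a sequence $v_1,\dots,v_k$ with $v_i$ a strict ancestor of $v_{i+1}$ and labels in the same relative order as $\pi$; a forest avoids $\pi$ if it has no instance. A vertex $v$ is a top-down minimum (TDM) if $L(u)\ge L(v)$ for every ancestor $u$ of $v$; other vertices are non-TDM. For a non-TDM vertex $v$, its segment is the set of TDM ancestors $u$ of $v$ with $L(u)<L(v)$ (these are the TDM vertices on the path from some vertex down to $v$); the top of the segment is the vertex of the segment closest to the root (equivalently, the one with the greatest label). Two vertices are comparable if one is an ancestor of the other. A $P_2$-forest is a forest in which, whenever two comparable non-TDM vertices have intersecting segments, the tops of their segments coincide. *)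

From mathcomp Require Import all_boot all_order all_algebra.
Set Implicit Arguments. Unset Strict Implicit. Unset Printing Implicit Defensive.
Import Order.TTheory GRing.Theory Num.Theory.

(* A rooted labeled forest on a finite vertex type V is given by a parent map
   par : V -> option V (None = root of its component) which is well founded
   (iterating the parent map from any vertex reaches None), together with an
   injective labelling L : V -> int. *)

Section Forest.
Variables (V : finType) (par : V -> option V) (L : V -> int).

Definition pstep (o : option V) : option V := obind par o.

Definition forest_wf : Prop := forall v : V, exists k, iter k pstep (Some v) = None.

Definition anc (u v : V) : Prop := exists k, iter k pstep (Some v) = Some u.

Definition strict_anc (u v : V) : Prop :=
  exists k, 0 < k /\ iter k pstep (Some v) = Some u.

Definition comparable (u v : V) : Prop := anc u v \/ anc v u.

Definition instance (pi : seq nat) (f : 'I_(size pi) -> V) : Prop :=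
  (forall i j : 'I_(size pi), val j = (val i).+1 -> strict_anc (f i) (f j)) /\
  (forall i j : 'I_(size pi), (L (f i) < L (f j))%R = (nth 0 pi i < nth 0 pi j)%N).

Definition avoids (pi : seq nat) : Prop := forall f : 'I_(size pi) -> V, ~ @instance pi f.

Definition TDM (v : V) : Prop := forall u, anc u v -> (L v <= L u)%R.

Definition segment (v : V) (u : V) : Prop := TDM u /\ anc u v /\ (L u < L v)%R.

Definition seg_top (v t : V) : Prop := segment v t /\ forall u, segment v u -> anc t u.

Definition P2_forest : Prop :=
  forall v w : V, ~ TDM v -> ~ TDM w -> comparable v w ->
    (exists u, segment v u /\ segment w u) ->
    forall t1 t2, seg_top v t1 -> seg_top w t2 -> t1 = t2.

End Forest.
Arguments instance {V} par L pi f.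

From Pilot Require Import Defs.
From mathcomp Require Import all_boot all_order all_algebra.
From Stdlib Require Import ClassicalEpsilon.
Set Implicit Arguments. Unset Strict Implicit. Unset Printing Implicit Defensive.
Import Order.TTheory GRing.Theory Num.Theory.
Local Open Scope ring_scope.

(* Labels of TDM vertices decrease along a path, so the top of a nonempty
   segment is its element of largest label.  Let v be an ancestor of w whose
   segments meet but have distinct tops t1, t2.  If t1 is above t2, maximality
   of the top of w forces L w < L t1, so t1 t2 v w is an occurrence of 3142;
   if t2 is above t1, then L v < L t2 for the same reason, and t1 v w is an
   occurrence of 123.  Conversely, given an occurrence a b c d of 3142, the
   lowest TDM ancestor of b lies in the segments of both c and d, which
   therefore share their top t in a P2-forest; t is above the lowest TDM
   ancestor of a and L t < L d < L a, so t a c is an occurrence of 123. *)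

Section ClassicalExtremum.
Variables (T : finType) (d : Order.disp_t) (R : orderType d).
Variables (F : T -> R) (P : T -> Prop).

Let bP (x : T) : bool := if excluded_middle_informative (P x) then true else false.

Let bPP x : reflect (P x) (bP x).
Proof. by rewrite /bP; case: excluded_middle_informative => ?; constructor. Qed.

Lemma exists_argmin : (exists x, P x) -> exists2 m, P m & forall u, P u -> (F m <= F u)%O.
Proof.
case=> x /bPP Px; case: (arg_minP F Px) => m /bPP Pm minm.
by exists m => // u /bPP; apply: minm.
Qed.

Lemma exists_argmax : (exists x, P x) -> exists2 m, P m & forall u, P u -> (F u <= F m)%O.
Proof.
case=> x /bPP Px; case: (arg_maxP F Px) => m /bPP Pm maxm.
by exists m => // u /bPP; apply: maxm.
Qed.

End ClassicalExtremum.

Section Forest.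
Variables (V : finType) (par : V -> option V) (L : V -> int).

Local Notation anc := (anc par).
Local Notation strict_anc := (strict_anc par).
Local Notation TDM := (TDM par L).
Local Notation segment := (segment par L).
Local Notation seg_top := (seg_top par L).
Local Notation avoids := (avoids par L).
Local Notation comparable := (Defs.comparable par).

Hypothesis wf : forest_wf par.
Hypothesis L_inj : injective L.

Lemma anc_refl x : anc x x.
Proof. by exists 0%N. Qed.

Lemma anc_trans x y z : anc x y -> anc y z -> anc x z.
Proof. by case=> k1 xy [k2 yz]; exists (k1 + k2)%N; rewrite iterD yz. Qed.

Lemma anc_total x y z : anc x z -> anc y z -> comparable x y.
Proof.
case=> k1 xz [k2 yz]; case: (leqP k1 k2) => k12.
  by right; exists (k2 - k1)%N; rewrite -xz -iterD subnK.
by left; exists (k1 - k2)%N; rewrite -yz -iterD subnK // ltnW.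
Qed.

Lemma strict_ancW x y : strict_anc x y -> anc x y.
Proof. by case=> k [_ xy]; exists k. Qed.

Lemma strict_anc_neq x y : anc x y -> x <> y -> strict_anc x y.
Proof. by case=> -[|k] xy neq; [case: neq; case: xy | exists k.+1]. Qed.

Lemma no_cycle x k : (0 < k)%N -> iter k (pstep par) (Some x) <> Some x.
Proof.
move=> k_gt0 cyc; have [n xn] := wf x.
have: iter (n * k) (pstep par) (Some x) = Some x.
  by elim: n {xn} => // n IH; rewrite mulSn iterD IH.
by rewrite -(subnK (leq_pmulr n k_gt0)) iterD xn iter_fix.
Qed.

Lemma anc_antisym x y : anc x y -> anc y x -> x = y.
Proof.
case=> k1 xy [k2 yx].
have cyc : iter (k1 + k2) (pstep par) (Some x) = Some x by rewrite iterD yx.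
case: (posnP (k1 + k2)) => [/eqP|k_gt0]; last by case: (no_cycle k_gt0 cyc).
by rewrite addn_eq0 => /andP[/eqP k10 _]; move: xy; rewrite k10 => -[].
Qed.

Lemma lt_strict_anc x y : anc x y -> L x < L y -> strict_anc x y.
Proof. by move=> xy lxy; apply: (strict_anc_neq xy) => exy; move: lxy; rewrite exy ltxx. Qed.

Lemma TDM_strict_anc x y : TDM x -> ~ TDM y -> anc x y -> strict_anc x y.
Proof. by move=> Tx nTy xy; apply: (strict_anc_neq xy) => exy; apply: nTy; rewrite -exy. Qed.

Lemma not_TDM_lt x y : anc x y -> L x < L y -> ~ TDM y.
Proof. by move=> xy lxy Ty; move: (Ty x xy); rewrite leNgt lxy. Qed.

Lemma segment_not_TDM v u : segment v u -> ~ TDM v.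
Proof. by case=> _ []; apply: not_TDM_lt. Qed.

Lemma exists_TDM_anc v : exists m, [/\ anc m v, TDM m & L m <= L v].
Proof.
have [m mv minm] := exists_argmin L (ex_intro (anc^~ v) v (anc_refl v)).
exists m; split => //; last exact: minm (anc_refl v).
by move=> u um; apply: minm; apply: anc_trans um mv.
Qed.

Lemma TDM_anc_segment m x v : TDM m -> anc m x -> L m <= L x ->
  anc x v -> L x < L v -> segment v m.
Proof.
move=> Tm mx lmx xv lxv; split=> //; split.
- exact: anc_trans mx xv.
- exact: le_lt_trans lmx lxv.
Qed.

Lemma exists_seg_top v : (exists u, segment v u) -> exists t, seg_top v t.
Proof.
move=> /(exists_argmax L) [t st maxt]; exists t; split => // u su.
have [//|ut] := anc_total st.2.1 su.2.1.
suff -> : u = t by apply: anc_refl.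
by apply/L_inj/le_anti; rewrite maxt //= st.1.
Qed.

Lemma seg_top_maximal v t x : seg_top v t -> TDM x -> anc x v -> anc x t -> x <> t ->
  L v < L x.
Proof.
move=> [st topt] Tx xv xt neq.
case: (ltgtP (L x) (L v)) => [lxv | // | /L_inj exv]; case: neq.
- by apply: anc_antisym xt _; apply: topt.
- by apply: anc_antisym xt _; rewrite exv; exact: st.2.1.
Qed.

Lemma not_avoids_nth (pi : seq nat) (s : seq V) x0 : size s = size pi ->
  (forall i, (i.+1 < size s)%N -> strict_anc (nth x0 s i) (nth x0 s i.+1)) ->
  (forall i j, (i < size s)%N -> (j < size s)%N ->
     (L (nth x0 s i) < L (nth x0 s j)) = (nth 0 pi i < nth 0 pi j)%N) ->
  ~ avoids pi.
Proof.
move=> sz chain lab av; apply: (av (fun i => nth x0 s i)); split.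
- by move=> i j ji; rewrite ji; apply: chain; rewrite sz -ji ltn_ord.
- by move=> i j; apply: lab; rewrite sz ltn_ord.
Qed.

Lemma not_avoids123 x y z : strict_anc x y -> strict_anc y z ->
  L x < L y -> L y < L z -> ~ avoids [:: 1; 2; 3]%N.
Proof.
move=> xy yz lxy lyz; have lxz := lt_trans lxy lyz.
apply: (@not_avoids_nth _ [:: x; y; z] x) => //; first by case=> [|[|]].
by case=> [|[|[|i]]] [|[|[|j]]] //= _ _; rewrite ?ltxx // lt_gtF.
Qed.

Lemma avoids3142P : avoids [:: 3; 1; 4; 2]%N <->
  (forall a b c d, strict_anc a b -> strict_anc b c -> strict_anc c d ->
     L b < L d -> L d < L a -> L a < L c -> False).
Proof.
split=> [av a b c d ab bc cd lbd lda lac | no_occ f [chain lab]].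
  have [lba ldc] := (lt_trans lbd lda, lt_trans lda lac).
  have lbc := lt_trans lba lac.
  move: av; apply: (@not_avoids_nth _ [:: a; b; c; d] a) => //; first by case=> [|[|[|]]].
  by case=> [|[|[|[|i]]]] [|[|[|[|j]]]] //= _ _; rewrite ?ltxx // lt_gtF.
pose o i (lt_i4 : (i < 4)%N) : 'I_4 := Ordinal lt_i4.
apply: (no_occ (f (o 0 isT)) (f (o 1 isT)) (f (o 2 isT)) (f (o 3 isT))).
1-3: exact: chain.
all: by rewrite lab.
Qed.

Lemma avoids_seg_top_eq v w u t1 t2 :
  avoids [:: 1; 2; 3]%N -> avoids [:: 3; 1; 4; 2]%N ->
  ~ TDM v -> ~ TDM w -> anc v w -> segment v u -> segment w u ->
  seg_top v t1 -> seg_top w t2 -> t1 = t2.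
Proof.
move=> a123 /avoids3142P a3142 nTv nTw vw sv sw st1 st2.
have [[T1 [t1v lt1v]] [T2 [_ lt2w]]] := (st1.1, st2.1).
have t2v : anc t2 v := anc_trans (st2.2 u sw) sv.2.1.
case: (eqVneq t1 t2) => // /eqP ne; exfalso.
have [t12|t21] := anc_total (st1.2 u sv) (st2.2 u sw).
- have lwt1 : L w < L t1 := seg_top_maximal st2 T1 (anc_trans t1v vw) t12 ne.
  apply: (a3142 t1 t2 v w) => //.
  + exact: strict_anc_neq t12 ne.
  + exact: TDM_strict_anc T2 nTv t2v.
  + apply: (strict_anc_neq vw) => evw.
    by move: (lt_trans lwt1 lt1v); rewrite evw ltxx.
- have lvt2 : L v < L t2 := seg_top_maximal st1 T2 t2v t21 (not_eq_sym ne).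
  have lvw := lt_trans lvt2 lt2w.
  by apply: (not_avoids123 (TDM_strict_anc T1 nTv t1v) (lt_strict_anc vw lvw)).
Qed.

Lemma P2_avoids3142 : avoids [:: 1; 2; 3]%N -> P2_forest par L ->
  avoids [:: 3; 1; 4; 2]%N.
Proof.
move=> a123 P2; apply/avoids3142P => a b c d.
move=> /strict_ancW ab /strict_ancW bc /strict_ancW cd lbd lda lac.
have [p [pb Tp lpb]] := exists_TDM_anc b.
have spc := TDM_anc_segment Tp pb lpb bc (lt_trans lbd (lt_trans lda lac)).
have spd := TDM_anc_segment Tp pb lpb (anc_trans bc cd) lbd.
have [t tc] := exists_seg_top (ex_intro _ p spc).
have [t' td] := exists_seg_top (ex_intro _ p spd).
have tt' : t = t' := P2 c d (segment_not_TDM spc) (segment_not_TDM spd)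
  (or_introl cd) (ex_intro _ p (conj spc spd)) t t' tc td.
have [q [qa Tq lqa]] := exists_TDM_anc a.
have sqc := TDM_anc_segment Tq qa lqa (anc_trans ab bc) lac.
have lta : L t < L a by rewrite tt'; apply: lt_trans lda; exact: td.1.2.2.
apply: (not_avoids123 _ (lt_strict_anc (anc_trans ab bc) lac) lta lac) a123.
exact: lt_strict_anc (anc_trans (tc.2 q sqc) qa) lta.
Qed.

End Forest.

Theorem lemma3p15 (V : finType) (par : V -> option V) (L : V -> int) :
  forest_wf par -> injective L ->
  avoids par L [:: 1; 2; 3]%N ->
  (avoids par L [:: 3; 1; 4; 2]%N <-> P2_forest par L).
Proof.
move=> wf L_inj a123; split=> [a3142|]; last exact: P2_avoids3142.
move=> v w nTv nTw [vw|wv] [u [sv sw]] t1 t2 st1 st2.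
  exact: avoids_seg_top_eq sv sw st1 st2.
by apply: esym; apply: avoids_seg_top_eq sw sv st2 st1.
Qed.
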